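(* Let $s\in\mathscr S_+^\circ$, let $d=\min\{i\in\omega: s_i=0\}$, and let $s^+\in\mathscr S_+$ be defined by $\operatorname{supp}(s^+)=\operatorname{supp}(s)\cup\{d\}$. Then $s^+\in\mathscr S_+^\circ$, $s\prec s^+$, and $\mathfrak d(s^+)=\mathfrak d(s)+1$.
   Context: $\omega=\{0,1,\dots\}$, $[m]=\{1,\dots,m\}$. A finite sign sequence is $s\in\{-,0,+\}^\omega$ with finitely many nonzero entries; $\mathscr S$ their set; $\operatorname{supp}(s)=\{i:s_i\ne0\}$; $\mathscr S_+=\mathscr S\cap\{0,+\}^\omega$. $\mathrm{SC}(t)$ = number of pairs $i<j$ with $\{t_i,t_j\}=\{-,+\}$ and $t_k=0$ for $i<k<j$. $\mathfrak d(s)=\max\{\mathrm{SC}(t):t\in\mathscr S,\ t_i\in\{-,0,s_i\}\ \forall i\}$. $\mathscr S_+^\circ=\{s\in\mathscr S_+:\mathfrak d(s)=\#\operatorname{supp}(s)\}$. Interval decomposition of $s\in\mathscr S_+$: $\operatorname{supp}(s)=X_0\amalg\cdots\amalg X_k$ into intervals with $0\in X_0$ if $0\in\operatorname{supp}(s)$ else $X_0=\emptyset$, $X_i\neq\emptyset$ for $i\in[k]$, $\min X_i-\max X_{i-1}\ge2$ ($\max\emptyset=-\infty$). $\lfloor X_i\rfloor=\{\min X_i-1\}\amalg X_i$ if $\#X_i$ odd, else $X_i$; $\lceil X_i\rceil=X_i\amalg\{\max X_i+1\}$ if $\#X_i$ odd, else $X_i$; $\operatorname{supp}(\lfloor s\rfloor)=X_0\amalg\lfloor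 X_1\rfloor\amalg\cdots\amalg\lfloor X_k\rfloor$, $\operatorname{supp}(\lceil s\rceil)=X_0\amalg\lceil X_1\rceil\amalg\cdots\amalg\lceil X_k\rceil$. On $\mathscr S_+^\circ$: $s\preceq_0 s'$ iff, with supports $\{d_1>\cdots>d_m\}$, $\{d'_1>\cdots>d'_{m'}\}$, $m\le m'$ and $d_i\le d'_i$ for $i\in[m]$. On $\mathscr S_+$: $s\preceq s'$ iff $s=s'$, or $s\ne s'$ and $\lceil s\rceil\preceq_0\lfloor s'\rfloor$; $s\prec s'$ means $s\preceq s'$, $s\ne s'$. *)

From HB Require Import structures.
From mathcomp Require Import all_boot.
Set Implicit Arguments. Unset Strict Implicit. Unset Printing Implicit Defensive.

Inductive sign := Neg | Zer | Pos.

Definition sign_eqb (a b : sign) : bool :=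
  match a, b with
  | Neg, Neg | Zer, Zer | Pos, Pos => true
  | _, _ => false
  end.

Lemma sign_eqP : Equality.axiom sign_eqb.
Proof. by case; case; constructor. Qed.

HB.instance Definition _ := hasDecEq.Build sign sign_eqP.

(* A finite sign sequence s in S is represented by a list [s] : seq sign;
   its i-th entry is [s_i] := nth Zer s i (entries beyond the list are 0).
   Two lists represent the same element of S iff they agree entrywise. *)
Definition entry (s : seq sign) (i : nat) : sign := nth Zer s i.

Definition seq_eq (s s' : seq sign) : Prop := forall i, entry s i = entry s' i.

Definition inSupp (s : seq sign) (i : nat) : bool := entry s i != Zer.

Definition suppl (s : seq sign) : seq nat := [seq i <- iota 0 (size s) | inSupp s i].

Definition Splus (s : seq sign) : Prop := forall i, entry s i != Neg.

Definition signchange (t : seq sign) (i j : nat) : bool :=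
  [&& ((entry t i == Neg) && (entry t j == Pos)) ||
      ((entry t i == Pos) && (entry t j == Neg)),
      i < j &
      all (fun k => entry t k == Zer) (iota i.+1 (j - i.+1))].

Definition SC (t : seq sign) : nat :=
  \sum_(j < size t) \sum_(i < j) signchange t i j.

Definition admissible (s t : seq sign) : Prop :=
  forall i, entry t i = Neg \/ entry t i = Zer \/ entry t i = entry s i.

Definition IsDd (s : seq sign) (n : nat) : Prop :=
  (exists t, admissible s t /\ SC t = n) /\
  (forall t, admissible s t -> SC t <= n).

Definition SplusCirc (s : seq sign) : Prop :=
  Splus s /\ IsDd s (size (suppl s)).

(* [a,b] is one of the intervals of the interval decomposition of supp(s):
   a maximal interval of consecutive support elements. *)
Definition is_run (s : seq sign) (a b : nat) : bool :=
  [&& a <= b, all (inSupp s) (iota a (b.+1 - a)),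
      (a == 0) || ~~ inSupp s a.-1 & ~~ inSupp s b.+1].

(* i = min X_k - 1 for some X_k (k >= 1, i.e. min X_k >= 1) of odd size *)
Definition floor_add (s : seq sign) (i : nat) : bool :=
  has (fun b => is_run s i.+1 b && odd (b - i)) (iota i.+1 (size s)).

(* i = max X_k + 1 for some X_k with k >= 1 (min X_k >= 1) of odd size *)
Definition ceil_add (s : seq sign) (i : nat) : bool :=
  (0 < i) && has (fun a => (0 < a) && is_run s a i.-1 && odd (i - a)) (iota 1 i).

Definition sfloor (s : seq sign) : seq sign :=
  mkseq (fun i => if inSupp s i || floor_add s i then Pos else Zer) (size s).

Definition sceil (s : seq sign) : seq sign :=
  mkseq (fun i => if inSupp s i || ceil_add s i then Pos else Zer) (size s).+1.

Definition preceq0 (s s' : seq sign) : bool :=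
  let d := rev (suppl s) in let d' := rev (suppl s') in
  (size d <= size d') && all (fun i => nth 0 d i <= nth 0 d' i) (iota 0 (size d)).

Definition preceq (s s' : seq sign) : Prop :=
  seq_eq s s' \/ (~ seq_eq s s' /\ preceq0 (sceil s) (sfloor s')).

Definition prec (s s' : seq sign) : Prop := preceq s s' /\ ~ seq_eq s s'.

From mathcomp Require Import all_boot zify.

Set Implicit Arguments.
Unset Strict Implicit.
Unset Printing Implicit Defensive.

(* SC t only sees the nonzero entries of t: it counts their sign changes.
   Upper bound: given a witness t for s^+, forget t_0 and shift t_1, ..., t_d
   one place to the left, putting 0 at d; this is a witness for s with at most
   one sign change less, so d(s^+) <= d(s) + 1.
   Lower bound: for u in S_+, the witness whose k-th sign is + exactly when the
   run of supp(u) starting at k has odd length changes sign after every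
   element of supp(u), so d(u) >= #supp(u).  It has one more change just before
   any odd interval X_i with min X_i > 0; hence for s in S_+^circ there is no
   such interval, ceil(s) = s, and s < s^+ reduces to the inclusions
   supp(s) in supp(s^+) in supp(floor(s^+)). *)

Definition opposite (a b : sign) : bool :=
  ((a == Neg) && (b == Pos)) || ((a == Pos) && (b == Neg)).

Fixpoint changes (l : seq sign) : nat :=
  if l is x :: ((y :: _) as l') then opposite x y + changes l' else 0.

Definition nonzero (t : seq sign) : seq sign := [seq x <- t | x != Zer].

Definition first_change (x : sign) (t : seq sign) : nat :=
  if nonzero t is y :: _ then opposite x y else 0.

Lemma opposite_Zerl x : opposite Zer x = false. Proof. by case: x. Qed.

Lemma opposite_Zerr x : opposite x Zer = false. Proof. by case: x. Qed.

Lemma iotaS m n : iota m.+1 n = map succn (iota m n).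
Proof. by rewrite -addn1 addnC iotaDl. Qed.

Lemma signchangeSS x t i j : signchange (x :: t) i.+1 j.+1 = signchange t i j.
Proof. by rewrite /signchange ltnS subSS iotaS all_map. Qed.

Lemma signchange0S x t j :
  signchange (x :: t) 0 j.+1 =
  opposite x (entry t j) && all (fun k => entry t k == Zer) (iota 0 j).
Proof. by rewrite /signchange /= subn1 /= iotaS all_map /opposite; case: (_ || _). Qed.

Lemma sum_first_change x t :
  \sum_(j < size t) (opposite x (entry t j) && all (fun k => entry t k == Zer) (iota 0 j))
  = first_change x t.
Proof.
elim: t => [|y t IH]; first by rewrite big_ord0.
rewrite /= big_ord_recl /=.
under eq_bigr => j _ do rewrite /bump /= iotaS all_map /= add0n.
case: (eqVneq y Zer) => [->|yNZ] /=; first by rewrite opposite_Zerr IH.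
by rewrite big1 ?addn0 /first_change /= ?yNZ ?andbT // => j _; rewrite andbF.
Qed.

Lemma SC_cons x t : SC (x :: t) = SC t + first_change x t.
Proof.
rewrite /SC [size _]/= big_ord_recl big_ord0 add0n.
under eq_bigr => j _ do rewrite lift0 big_ord_recl.
rewrite big_split /= addnC -sum_first_change; congr (_ + _).
  by apply: eq_bigr => j _; apply: eq_bigr => i _; rewrite /bump add1n signchangeSS.
by apply: eq_bigr => j _; rewrite signchange0S.
Qed.

Lemma SC_behead t : SC t <= (SC (behead t)).+1.
Proof.
case: t => [|x t] //=; rewrite SC_cons -addn1 leq_add2l /first_change.
by case: (nonzero t) => // y _; apply: leq_b1.
Qed.

Lemma SC_changes t : SC t = changes (nonzero t).
Proof.
elim: t => [|x t IH]; first by rewrite /SC big_ord0.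
rewrite SC_cons IH /first_change /=.
case: (eqVneq x Zer) => [->|_] /=.
  by case: (nonzero t) => [|y l]; rewrite /= ?opposite_Zerl addn0.
by case: (nonzero t) => //= y l; rewrite addnC.
Qed.

Lemma changes_map (f : nat -> sign) m n :
  changes (map f (iota m n.+1)) = count (fun k => opposite (f k) (f k.+1)) (iota m n).
Proof. by elim: n m => [|n IH] m //=; rewrite -IH. Qed.

Fixpoint lead_run (u : seq sign) : nat :=
  if u is x :: u' then (if x == Zer then 0 else (lead_run u').+1) else 0.

Definition run_from (u : seq sign) (k : nat) : nat := lead_run (drop k u).

Definition alt_sign (u : seq sign) (k : nat) : sign :=
  if odd (run_from u k) then Pos else Neg.

Definition alternating (u : seq sign) : seq sign := mkseq (alt_sign u) (size u).+1.

Lemma inSupp_oversize u k : size u <= k -> inSupp u k = false.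
Proof. by move=> h; rewrite /inSupp /entry nth_default. Qed.

Lemma inSupp_size u k : inSupp u k -> k < size u.
Proof. by rewrite ltnNge; apply: contraL => /inSupp_oversize ->. Qed.

Lemma run_fromE u k : run_from u k = if inSupp u k then (run_from u k.+1).+1 else 0.
Proof.
rewrite /run_from /inSupp /entry; case: (ltnP k (size u)) => [lt_k|le_k].
  by rewrite (drop_nth Zer lt_k) /=; case: eqP.
by rewrite !drop_oversize ?nth_default // (leq_trans le_k).
Qed.

Lemma opposite_alt_sign u k : inSupp u k -> opposite (alt_sign u k) (alt_sign u k.+1).
Proof. by move=> uk; rewrite /alt_sign (run_fromE u k) uk /=; case: odd. Qed.

Lemma run_from_run u a b : is_run u a b -> run_from u a = b.+1 - a.
Proof.
case/and4P => le_ab /allP in_run _ bN.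
suff run_b : forall j, j <= b - a -> run_from u (b - j) = j.+1.
  by rewrite -{1}(subKn le_ab) run_b // subSn.
elim=> [|j IH] le_j; rewrite run_fromE in_run ?mem_iota; try lia.
  by rewrite subn0 run_fromE (negbTE bN).
by rewrite -subSn ?subSS ?IH //; lia.
Qed.

Lemma entry_mkseq (f : nat -> sign) n i : entry (mkseq f n) i = if i < n then f i else Zer.
Proof.
rewrite /entry; case: ltnP => h; first by rewrite nth_mkseq.
by rewrite nth_default // size_mkseq.
Qed.

Lemma entry_splus u : Splus u -> forall k, entry u k = if inSupp u k then Pos else Zer.
Proof. by move=> uP k; move: (uP k); rewrite /inSupp; case: (entry u k). Qed.

Lemma admissible_alternating u : Splus u -> admissible u (alternating u).
Proof.
move=> uP k; rewrite entry_mkseq (entry_splus uP) /alt_sign run_fromE.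
by case: ifP => _; case: inSupp => /=; try case: odd; auto.
Qed.

Lemma SC_alternating u :
  SC (alternating u) = count (fun k => opposite (alt_sign u k) (alt_sign u k.+1)) (iota 0 (size u)).
Proof.
rewrite SC_changes; have -> : nonzero (alternating u) = alternating u.
  by apply/all_filterP; rewrite all_map; apply/allP => k _ /=; rewrite /alt_sign; case: odd.
exact: changes_map.
Qed.

Lemma suppl_iota u N : size u <= N -> suppl u = filter (inSupp u) (iota 0 N).
Proof.
move=> le_uN; rewrite /suppl -(subnKC le_uN) iotaD filter_cat add0n.
rewrite [filter _ (iota (size u) _)](@eq_in_filter _ _ pred0) ?filter_pred0 ?cats0 // => k.
by rewrite mem_iota => /andP [uk _]; rewrite inSupp_oversize.
Qed.

Lemma size_suppl_count u N : size u <= N -> size (suppl u) = count (inSupp u) (iota 0 N).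
Proof. by move=> le_uN; rewrite (suppl_iota le_uN) size_filter. Qed.

Lemma size_suppl_le_SC_alternating u : size (suppl u) <= SC (alternating u).
Proof.
rewrite SC_alternating (size_suppl_count (leqnn _)).
by apply: sub_count => k; apply: opposite_alt_sign.
Qed.

Lemma size_suppl_lt_SC_alternating u a b :
  0 < a -> is_run u a b -> odd (b.+1 - a) -> size (suppl u) < SC (alternating u).
Proof.
move=> a_gt0 run_ab odd_ab; have /and4P [_ /allP in_run a_first _] := run_ab.
have ua : inSupp u a by apply: in_run; rewrite mem_iota; lia.
have Nua : ~~ inSupp u a.-1 by move: a_first; rewrite eqn0Ngt a_gt0.
rewrite SC_alternating (size_suppl_count (leqnn _)).
have -> : iota 0 (size u) = iota 0 a.-1 ++ a.-1 :: iota a (size u - a).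
  have size_u : size u = a.-1 + (size u - a).+1 by have := inSupp_size ua; lia.
  by rewrite {1}size_u iotaD add0n /= prednK.
rewrite !count_cat /= (negbTE Nua) add0n.
have -> : opposite (alt_sign u a.-1) (alt_sign u a.-1.+1).
  by rewrite prednK // /alt_sign (run_from_run run_ab) odd_ab run_fromE (negbTE Nua).
rewrite add1n addnS ltnS.
by apply: leq_add; apply: sub_count => k; apply: opposite_alt_sign.
Qed.

Definition shift_prefix (t : seq sign) (d : nat) : seq sign :=
  mkseq (fun k => entry t k.+1) d ++ Zer :: drop d.+1 t.

Lemma entry_shift_prefix t d k :
  entry (shift_prefix t d) k =
  if k < d then entry t k.+1 else if k == d then Zer else entry t k.
Proof.
rewrite /shift_prefix /entry nth_cat size_mkseq.
case: ltnP => [lt_kd|le_dk]; first by rewrite nth_mkseq.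
case: eqVneq => [->|neq_kd]; first by rewrite subnn.
have lt_dk : d < k by rewrite ltn_neqAle eq_sym neq_kd.
by rewrite -(subnSK lt_dk) /= nth_drop subnKC.
Qed.

Lemma nonzero_mkseq_entry u d : nonzero (mkseq (entry u) d) = nonzero (take d u).
Proof.
elim: d u => [|d IH] [|x u] //.
  rewrite /nonzero /mkseq filter_map (@eq_filter _ _ pred0) ?filter_pred0 // => k.
  by rewrite /= /entry nth_nil.
rewrite /mkseq /= iotaS -map_comp -[map _ _]/(mkseq (entry u) d).
by rewrite /nonzero /= -!/(nonzero _) IH.
Qed.

Lemma SC_shift_prefix t d : SC (shift_prefix t d) = SC (behead t).
Proof.
rewrite !SC_changes /shift_prefix /nonzero filter_cat /= -/(nonzero _).
have -> : mkseq (fun k => entry t k.+1) d = mkseq (entry (behead t)) d.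
  by apply: eq_mkseq => k; rewrite /entry nth_behead.
rewrite nonzero_mkseq_entry /nonzero -filter_cat.
by rewrite -[in RHS](cat_take_drop d (behead t)) -drop1 drop_drop addn1.
Qed.

Lemma nth_subseq_sorted_geq (x y : seq nat) : sorted geq y -> subseq x y ->
  forall i, i < size x -> nth 0 x i <= nth 0 y i.
Proof.
have geq_trans : transitive geq by move=> a b c le_ba le_cb; apply: leq_trans le_cb le_ba.
elim: y x => [|y0 y IH] [|x0 x] //= y_sorted.
have y_sorted' : sorted geq y := path_sorted y_sorted.
case: eqP => [-> sub [|i] //= lt_i|_ sub i lt_i]; first exact: IH.
have lt_iy : i < size y by apply: leq_trans lt_i (size_subseq sub).
apply: leq_trans (IH _ y_sorted' sub i lt_i) _.
have := @sorted_ltn_nth _ geq geq_trans 0 (y0 :: y) y_sorted i i.+1.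
by rewrite !inE /= ltnS ltnW //; apply.
Qed.

Lemma preceq0_inSupp A B : (forall i, inSupp A i -> inSupp B i) -> preceq0 A B.
Proof.
move=> sub_AB; pose N := maxn (size A) (size B).
have sub : subseq (rev (suppl A)) (rev (suppl B)).
  rewrite subseq_rev (suppl_iota (leq_maxl _ _ : size A <= N)).
  rewrite (suppl_iota (leq_maxr _ _ : size B <= N)).
  rewrite -(@eq_filter _ (predI (inSupp A) (inSupp B))) ?filter_predI ?filter_subseq //.
  by move=> k /=; apply/andb_idr/sub_AB.
have sorted_B : sorted geq (rev (suppl B)).
  by rewrite rev_sorted; apply: sorted_filter (iota_sorted 0 _); apply: leq_trans.
rewrite /preceq0 (size_subseq sub) /=; apply/allP => i.
by rewrite mem_iota => /andP [_ lt_i]; apply: nth_subseq_sorted_geq.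
Qed.

Lemma inSupp_sceil u i : inSupp (sceil u) i -> inSupp u i || ceil_add u i.
Proof. by rewrite /inSupp /sceil entry_mkseq; case: ltnP => // _; case: ifP. Qed.

Lemma inSupp_sfloor u i : inSupp u i -> inSupp (sfloor u) i.
Proof. by move=> ui; rewrite /inSupp /sfloor entry_mkseq (inSupp_size ui) ui. Qed.

Lemma IsDd_unique u m n : IsDd u m -> IsDd u n -> m = n.
Proof.
move=> [[t [ut <-]] t_max] [[t' [ut' <-]] t'_max].
by apply/eqP; rewrite eqn_leq t'_max ?t_max.
Qed.

Section SupportBound.

Variable u : seq sign.
Hypothesis u_plus : Splus u.
Hypothesis SC_le_supp : forall t, admissible u t -> SC t <= size (suppl u).

Let u_alt : admissible u (alternating u) := admissible_alternating u_plus.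

Lemma IsDd_supp : IsDd u (size (suppl u)).
Proof.
split=> //; exists (alternating u); split=> //.
by apply/eqP; rewrite eqn_leq size_suppl_le_SC_alternating SC_le_supp.
Qed.

Lemma ceil_add_supp i : ceil_add u i = false.
Proof.
apply/negP => /andP [i_gt0 /hasP [a _ /andP [/andP [a_gt0 run_a] odd_a]]].
have := size_suppl_lt_SC_alternating a_gt0 run_a; rewrite prednK // => /(_ odd_a).
by rewrite ltnNge SC_le_supp.
Qed.

End SupportBound.

Section Extension.

Variables (s sp : seq sign) (d : nat).
Hypotheses (s_plus : Splus s) (sp_plus : Splus sp).
Hypothesis s_d : entry s d = Zer.
Hypothesis supp_prefix : forall i, i < d -> entry s i != Zer.
Hypothesis supp_sp : forall i, inSupp sp i = inSupp s i || (i == d).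

Lemma admissible_shift_prefix t : admissible sp t -> admissible s (shift_prefix t d).
Proof.
move=> sp_t i; rewrite entry_shift_prefix.
case: ltnP => [lt_id|le_di].
  rewrite (entry_splus s_plus) /inSupp supp_prefix //.
  by case: (entry t i.+1); auto.
case: eqVneq => [_|neq_id]; first by auto.
move: (sp_t i).
by rewrite (entry_splus s_plus) (entry_splus sp_plus) supp_sp (negbTE neq_id) orbF.
Qed.

Lemma SC_le_extend n :
  (forall t, admissible s t -> SC t <= n) -> forall t, admissible sp t -> SC t <= n.+1.
Proof.
move=> SC_le t sp_t; apply: leq_trans (SC_behead t) _.
by rewrite ltnS -(SC_shift_prefix t d); apply/SC_le/admissible_shift_prefix.
Qed.

Lemma size_suppl_extend : size (suppl sp) = (size (suppl s)).+1.
Proof.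
have sp_d : inSupp sp d by rewrite supp_sp eqxx orbT.
pose N := maxn (size s) (size sp).
rewrite (size_suppl_count (leq_maxl _ _ : size s <= N)).
rewrite (size_suppl_count (leq_maxr _ _ : size sp <= N)).
rewrite (@eq_count _ _ (predU (inSupp s) (pred1 d))) => [|k]; last exact: supp_sp.
apply/eqP; rewrite -(eqn_add2r (count (predI (inSupp s) (pred1 d)) (iota 0 N))).
rewrite count_predUI (@eq_count _ (predI _ _) pred0) ?count_pred0 => [|k /=]; last first.
  by case: eqP => [->|]; rewrite ?andbF // /inSupp s_d.
rewrite count_uniq_mem ?iota_uniq // mem_iota /= (leq_trans (inSupp_size sp_d)) //.
  by rewrite addn0 addn1.
exact: leq_maxr.
Qed.

Lemma extend_neq : ~ seq_eq s sp.
Proof. by move/(_ d) => sp_d; move: (supp_sp d); rewrite /inSupp -sp_d s_d !eqxx orbT. Qed.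

End Extension.

Theorem mainTheorem13 (s : seq sign) (d : nat) (sp : seq sign) :
  SplusCirc s ->
  entry s d = Zer -> (forall i, i < d -> entry s i != Zer) ->
  Splus sp -> (forall i, inSupp sp i = inSupp s i || (i == d)) ->
  SplusCirc sp /\ prec s sp /\ (forall n, IsDd s n -> IsDd sp n.+1).
Proof.
move=> [s_plus s_circ] s_d supp_prefix sp_plus supp_sp.
have s_bound := s_circ.2.
have sp_size := size_suppl_extend s_d supp_sp.
have sp_bound : forall t, admissible sp t -> SC t <= size (suppl sp).
  by rewrite sp_size; apply: (SC_le_extend s_plus sp_plus supp_prefix supp_sp s_bound).
have sp_circ : IsDd sp (size (suppl sp)) := IsDd_supp sp_plus sp_bound.
split; first exact: conj sp_plus sp_circ.
split; last by move=> n /(IsDd_unique s_circ) <-; rewrite -sp_size.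
have neq := extend_neq s_d supp_sp.
split=> //; right; split=> //; apply: preceq0_inSupp => i /inSupp_sceil.
rewrite ceil_add_supp // orbF => s_i.
by apply: inSupp_sfloor; rewrite supp_sp s_i.
Qed.
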